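(* Let $([N],\mathcal{E})$ be a fixed (non-random) directed graph whose underlying undirected graph is a tree, and condition the model on the skeleton being this graph (i.e. $I_{vw}=1$ iff $(vw)\in\mathcal{E}$, with the types fixed). Let $\lambda\in(0,1]$ and define the solvency cascade by: for $n\ge0$, $\mathcal{D}^{(n)}_v:=g_\lambda(\Delta^{(n)}_v/\bar X_v)$ (with $\mathcal{D}^{(n)}_v:=0$ if $\bar X_v=0$), $S^{(n)}_{wv}:=I_{wv}\bar\Omega_{wv}\mathcal{D}^{(n)}_w$, $S^{(n)}_v:=\sum_{w\ne v}S^{(n)}_{wv}$, $\Delta^{(n+1)}_v:=\Delta^{(0)}_v-S^{(n)}_v$. Then for every $n\ge0$, every $v\in[N]$ and every edge $(wv)\in\mathcal{E}$: (1) $\Delta^{(n)}_v$ is $\sigma(\mathcal{M}^-_v\cup\{v\})$-measurable; (2) $S^{(n)}_{wv}$ is $\sigma(\mathcal{M}^-_w\cup\mathcal{M}^+_{w\setminus v}\cup\{w\}\cup\{(wv)\})$-measurable; (3) $S^{(n)}_v$ is $\sigma(\mathcal{M}^-_v)$-measurable.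
   Context: Balance-sheet data: initial solvency buffers $\Delta^{(0)}_u\in\mathbb{R}$ for nodes $u$ and exposures $\bar\Omega_{wv}\ge0$ for edges $(wv)$; an edge $(wv)\in\mathcal{E}$ (i.e. $I_{wv}=1$) means bank $w$ has borrowed from bank $v$, so shocks pass from $w$ to $v$. $\bar X_w:=\sum_{u}I_{wu}\bar\Omega_{wu}$ and $g_\lambda(x):=\min(1,\max(-x/\lambda,0))$. For a set $A$ of nodes and edges, $\sigma(A)$ is the sigma-algebra generated by $\{\Delta^{(0)}_u: u\in A \text{ a node}\}\cup\{\bar\Omega_{wv}:(wv)\in A\text{ an edge}\}$. For a node $u$ and an edge $e$ incident to $u$, let $C(e,u)$ be the set consisting of $e$ together with all nodes and edges of the connected component, not containing $u$, of the tree with $e$ removed. Define $\mathcal{M}^-_u:=\bigcup\{C(e,u): e=(wu)\in\mathcal{E}\text{ directed into }u\}$, $\mathcal{M}^+_u:=\bigcup\{C(e,u): e=(uw)\in\mathcal{E}\text{ directed out of }u\}$, and for an edge $(wv)\in\mathcal{E}$, $\mathcal{M}^-_{v\setminus w}:=\bigcup\{C(e,v): e\text{ directed into }v,\ e\neq(wv)\}$ and $\mathcal{M}^+_{w\setminus v}:=\bigcup\{C(e,w): e\text{ directed out of }w,\ e\ne(wv)\}$. *)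

From Stdlib Require Import Reals Lra Lia List Arith.
Import ListNotations.
Open Scope R_scope.

Inductive sigma_gen {T : Type} (G : (T -> Prop) -> Prop) : (T -> Prop) -> Prop :=
| sg_base : forall S, G S -> sigma_gen G S
| sg_full : sigma_gen G (fun _ => True)
| sg_compl : forall S, sigma_gen G S -> sigma_gen G (fun x => ~ S x)
| sg_union : forall F : nat -> T -> Prop,
    (forall k, sigma_gen G (F k)) -> sigma_gen G (fun x => exists k, F k x)
| sg_ext : forall S S', sigma_gen G S -> (forall x, S x <-> S' x) -> sigma_gen G S'.

Definition Borel : (R -> Prop) -> Prop :=
  sigma_gen (fun S => exists a : R, forall x, S x <-> x <= a).

Definition measurable_wrt {Omega : Type} (G : (Omega -> Prop) -> Prop)
  (Z : Omega -> R) : Prop :=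
  forall B, Borel B -> sigma_gen G (fun w => B (Z w)).

Inductive item : Type :=
| NodeI : nat -> item          (* node u : Delta^(0)_u *)
| EdgeI : nat -> nat -> item.  (* edge (w v) : Omegabar_{wv} *)

(* sigma(A): generated by Delta0_u (u a node in A) and Omegabar_{wv}
   ((wv) an edge in A). *)
Definition var {Omega : Type} (D0 : nat -> Omega -> R) (Om : nat -> nat -> Omega -> R)
  (i : item) : Omega -> R :=
  match i with NodeI u => D0 u | EdgeI w v => Om w v end.

Definition sigmaA {Omega : Type} (D0 : nat -> Omega -> R) (Om : nat -> nat -> Omega -> R)
  (A : item -> Prop) : (Omega -> Prop) -> Prop :=
  fun S => exists i, A i /\ exists B, Borel B /\ forall w, S w <-> B (var D0 Om i w).

(* E w v = true  means (wv) is a directed edge (w borrowed from v). *)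
Definition adj (E : nat -> nat -> bool) (u w : nat) : Prop :=
  E u w = true \/ E w u = true.

Inductive reach (Rl : nat -> nat -> Prop) : nat -> nat -> Prop :=
| reach_refl : forall x, reach Rl x x
| reach_step : forall x y z, Rl x y -> reach Rl y z -> reach Rl x z.

Fixpoint chain (Rl : nat -> nat -> Prop) (l : list nat) : Prop :=
  match l with
  | a :: ((b :: _) as t) => Rl a b /\ chain Rl t
  | _ => True
  end.

Definition is_tree (N : nat) (E : nat -> nat -> bool) : Prop :=
  (forall u w, E u w = true -> (u < N)%nat /\ (w < N)%nat) /\
  (forall u, E u u = false) /\
  (forall u w, E u w = true -> E w u = false) /\
  (forall x y, (x < N)%nat -> (y < N)%nat -> reach (adj E) x y) /\
  (forall (x : nat) (l : list nat), NoDup (x :: l) -> (2 <= length l)%nat ->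
      chain (adj E) (x :: l) -> adj E (last l x) x -> False).

(* Nodes of the connected component, containing x and not u, of the tree
   with the edge {u,x} removed. *)
Definition comp (E : nat -> nat -> bool) (u x y : nat) : Prop :=
  reach (fun p q => adj E p q /\ ~ ((p = u /\ q = x) \/ (p = x /\ q = u))) x y.

(* C(e,u) for the edge e between u and x (e is the item of that edge):
   e together with all nodes and edges of the component above. *)
Definition Cset (E : nat -> nat -> bool) (u x : nat) (e : item) (i : item) : Prop :=
  i = e \/
  match i with
  | NodeI y => comp E u x y
  | EdgeI p q => E p q = true /\ comp E u x p /\ comp E u x q
  end.

Definition Mminus (E : nat -> nat -> bool) (u : nat) (i : item) : Prop :=
  exists w, E w u = true /\ Cset E u w (EdgeI w u) i.

Definition Mplus (E : nat -> nat -> bool) (u : nat) (i : item) : Prop :=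
  exists w, E u w = true /\ Cset E u w (EdgeI u w) i.

Definition Mminus_excl (E : nat -> nat -> bool) (v w : nat) (i : item) : Prop :=
  exists w', E w' v = true /\ w' <> w /\ Cset E v w' (EdgeI w' v) i.

Definition Mplus_excl (E : nat -> nat -> bool) (w v : nat) (i : item) : Prop :=
  exists v', E w v' = true /\ v' <> v /\ Cset E w v' (EdgeI w v') i.

Definition g_lam (lam x : R) : R := Rmin 1 (Rmax (- x / lam) 0).

Definition Ind (E : nat -> nat -> bool) (w v : nat) : R := if E w v then 1 else 0.

Definition Rsum_list (l : list nat) (f : nat -> R) : R :=
  fold_right (fun a acc => f a + acc) 0 l.

Definition Xbar {Omega : Type} (N : nat) (E : nat -> nat -> bool)
  (Om : nat -> nat -> Omega -> R) (w : nat) (om : Omega) : R :=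
  Rsum_list (seq 0 N) (fun u => Ind E w u * Om w u om).

Definition Dfun {Omega : Type} (N : nat) (E : nat -> nat -> bool)
  (Om : nat -> nat -> Omega -> R) (lam : R) (Delta : nat -> Omega -> R)
  (v : nat) (om : Omega) : R :=
  if Req_EM_T (Xbar N E Om v om) 0 then 0
  else g_lam lam (Delta v om / Xbar N E Om v om).

Definition Sfun {Omega : Type} (N : nat) (E : nat -> nat -> bool)
  (Om : nat -> nat -> Omega -> R) (lam : R) (Delta : nat -> Omega -> R)
  (v : nat) (om : Omega) : R :=
  Rsum_list (filter (fun w => negb (Nat.eqb w v)) (seq 0 N))
    (fun w => Ind E w v * Om w v om * Dfun N E Om lam Delta w om).

Fixpoint cascade {Omega : Type} (N : nat) (E : nat -> nat -> bool)
  (D0 : nat -> Omega -> R) (Om : nat -> nat -> Omega -> R) (lam : R)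
  (n : nat) : nat -> Omega -> R :=
  match n with
  | O => D0
  | S m => fun v om => D0 v om - Sfun N E Om lam (cascade N E D0 Om lam m) v om
  end.

Definition Dn {Omega : Type} N E (D0 : nat -> Omega -> R) Om lam n :=
  Dfun N E Om lam (cascade N E D0 Om lam n).

Definition S_edge {Omega : Type} N E (D0 : nat -> Omega -> R) Om lam n (w v : nat)
  (om : Omega) : R :=
  Ind E w v * Om w v om * Dn N E D0 Om lam n w om.

Definition S_node {Omega : Type} N E (D0 : nat -> Omega -> R) Om lam n (v : nat) :=
  Sfun N E Om lam (cascade N E D0 Om lam n) v.

(* Measurability is propagated along the cascade: Delta^(n+1)_v only involves
   Delta^(0)_v, the exposures (wv) into v, and D^(n)_w for the borrowers w of v,
   which in turn only involve the exposures out of w and Delta^(n)_w.  So every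
   quantity attached to a node y is measurable w.r.t. the data of any set K of
   nodes that contains y and is closed under taking predecessors, together with
   all edges leaving K.  On a tree, the component of w behind the edge (wv) is
   such a set, and it is contained in M^-_v. *)
From Pilot Require Import Defs.
From Stdlib Require Import Reals Lra List Classical.
Open Scope R_scope.

Section GeneratedSigma.

Variables (T : Type) (G : (T -> Prop) -> Prop).

Lemma sigma_gen_False : sigma_gen G (fun _ => False).
Proof. apply sg_ext with (fun x => ~ True); [apply sg_compl, sg_full | tauto]. Qed.

Lemma sigma_gen_const (P : Prop) : sigma_gen G (fun _ => P).
Proof.
  destruct (classic P).
  - apply sg_ext with (fun _ => True); [apply sg_full | tauto].
  - apply sg_ext with (fun _ => False); [apply sigma_gen_False | tauto].
Qed.

Lemma sigma_gen_or A B :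
  sigma_gen G A -> sigma_gen G B -> sigma_gen G (fun x => A x \/ B x).
Proof.
  intros HA HB.
  apply sg_ext with (fun x => exists k, (match k with O => A | _ => B end) x).
  - apply sg_union. intros [|k]; auto.
  - intros x; split.
    + intros [[|k] H]; auto.
    + intros [H|H]; [exists O | exists 1%nat]; auto.
Qed.

Lemma sigma_gen_and A B :
  sigma_gen G A -> sigma_gen G B -> sigma_gen G (fun x => A x /\ B x).
Proof.
  intros HA HB.
  apply sg_ext with (fun x => ~ (~ A x \/ ~ B x)).
  - apply sg_compl, sigma_gen_or; apply sg_compl; auto.
  - intros x; split; [|tauto].
    intro H. destruct (classic (A x)), (classic (B x)); tauto.
Qed.

Lemma sigma_gen_forall (F : nat -> T -> Prop) :
  (forall k, sigma_gen G (F k)) -> sigma_gen G (fun x => forall k, F k x).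
Proof.
  intros H. apply sg_ext with (fun x => ~ exists k, ~ F k x).
  - apply sg_compl, sg_union. intro k; apply sg_compl; auto.
  - intros x; split.
    + intros H1 k. apply NNPP. intro H2. apply H1. eauto.
    + intros H1 [k Hk]. auto.
Qed.

Lemma measurable_wrt_ext (Z Z' : T -> R) :
  measurable_wrt G Z -> (forall w, Z w = Z' w) -> measurable_wrt G Z'.
Proof.
  intros H He B HB. apply sg_ext with (fun w => B (Z w)); auto.
  intros; rewrite He; tauto.
Qed.

Lemma measurable_wrt_const c : measurable_wrt G (fun _ => c).
Proof. intros B _; apply sigma_gen_const. Qed.

End GeneratedSigma.

Arguments sigma_gen_const {T} G P.
Arguments measurable_wrt_const {T} G c.

Lemma sigma_gen_mono {T} (G G' : (T -> Prop) -> Prop) :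
  (forall S, G S -> G' S) -> forall S, sigma_gen G S -> sigma_gen G' S.
Proof.
  intros HG S H. induction H.
  - apply sg_base; auto.
  - apply sg_full.
  - apply sg_compl; auto.
  - apply sg_union; auto.
  - eapply sg_ext; eauto.
Qed.

Lemma measurable_wrt_mono {T} (G G' : (T -> Prop) -> Prop) Z :
  (forall S, G S -> G' S) -> measurable_wrt G Z -> measurable_wrt G' Z.
Proof. intros HG H B HB. eapply sigma_gen_mono; eauto. Qed.

Lemma inv_INR_S_pos n : 0 < / (INR n + 1).
Proof. apply Rinv_0_lt_compat. pose proof (pos_INR n). lra. Qed.

Lemma exists_inv_INR_S_lt e : 0 < e -> exists n, / (INR n + 1) < e.
Proof.
  intros He. destruct (archimed_cor1 e He) as [n [H1 H2]].
  exists n. apply Rle_lt_trans with (/ INR n); auto.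
  apply Rinv_le_contravar; [apply lt_0_INR; auto | lra].
Qed.

Lemma Borel_le a : Borel (fun x => x <= a).
Proof. apply sg_base. exists a; tauto. Qed.

Lemma Borel_lt a : Borel (fun x => x < a).
Proof.
  apply sg_ext with (fun x => exists n, (fun n x => x <= a - / (INR n + 1)) n x).
  - apply sg_union. intro; apply Borel_le.
  - intros x; split.
    + intros [n Hn]. pose proof (inv_INR_S_pos n). simpl in Hn. lra.
    + intros H. destruct (exists_inv_INR_S_lt (a - x)) as [n Hn]; [lra|].
      exists n. simpl. lra.
Qed.

Lemma Borel_ge a : Borel (fun x => a <= x).
Proof.
  apply sg_ext with (fun x => ~ x < a); [apply sg_compl, Borel_lt|].
  intros x; split; intros; lra.
Qed.

Lemma Borel_gt a : Borel (fun x => a < x).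
Proof.
  apply sg_ext with (fun x => ~ x <= a); [apply sg_compl, Borel_le|].
  intros x; split; intros; lra.
Qed.

Lemma Borel_eq a : Borel (fun x => x = a).
Proof.
  apply sg_ext with (fun x => x <= a /\ a <= x).
  - apply sigma_gen_and; [apply Borel_le | apply Borel_ge].
  - intros x; split; intros; lra.
Qed.

Lemma Borel_ball q c : Borel (fun x => Rabs (x - q) < c).
Proof.
  apply sg_ext with (fun x => x < q + c /\ q - c < x).
  - apply sigma_gen_and; [apply Borel_lt | apply Borel_gt].
  - intros x; split; intros H.
    + apply Rabs_def1; lra.
    + apply Rabs_def2 in H; lra.
Qed.

Section MeasurableFunctions.

Variables (T : Type) (G : (T -> Prop) -> Prop).

Lemma measurable_wrt_of_le (Z : T -> R) :
  (forall a, sigma_gen G (fun w => Z w <= a)) -> measurable_wrt G Z.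
Proof.
  intros H B HB. induction HB.
  - destruct H0 as [a Ha]. apply sg_ext with (fun w => Z w <= a); auto.
    intros; rewrite Ha; tauto.
  - apply sg_full.
  - apply sg_compl; auto.
  - apply (sg_union G (fun k w => F k (Z w))); auto.
  - apply sg_ext with (fun w => S (Z w)); auto.
Qed.

Lemma measurable_wrt_of_lt (Z : T -> R) :
  (forall a, sigma_gen G (fun w => Z w < a)) -> measurable_wrt G Z.
Proof.
  intros H. apply measurable_wrt_of_le. intros a.
  apply sg_ext with (fun w => forall n, (fun n w => Z w < a + / (INR n + 1)) n w).
  - apply sigma_gen_forall. intros n; apply H.
  - intros w; split.
    + intros Hn. destruct (Rle_dec (Z w) a) as [h|h]; auto.
      destruct (exists_inv_INR_S_lt (Z w - a)) as [n Hn']; [lra|].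
      specialize (Hn n). simpl in Hn. lra.
    + intros Hw n. simpl. pose proof (inv_INR_S_pos n). lra.
Qed.

Definition open2 (S : R -> R -> Prop) := forall x y, S x y -> exists r, 0 < r /\
  forall x' y', Rabs (x' - x) < r -> Rabs (y' - y) < r -> S x' y'.

Lemma INR_to_nat_sub z : INR (Z.to_nat z) - INR (Z.to_nat (- z)) = IZR z.
Proof.
  destruct z as [|p|p]; simpl; [lra | |]; rewrite INR_IPR; unfold IZR; lra.
Qed.

Lemma grid_approx x t : 0 < t -> exists i j : nat, Rabs (x - (INR i - INR j) * t) < 2 * t.
Proof.
  intros Ht. destruct (archimed (x / t)) as [h1 h2].
  exists (Z.to_nat (up (x / t))), (Z.to_nat (- up (x / t))).
  rewrite INR_to_nat_sub. set (z := IZR (up (x / t))) in *.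
  assert (Hx : x = (x / t) * t) by (field; lra).
  assert (A1 : z * t > (x / t) * t) by (apply Rmult_lt_compat_r; lra).
  assert (A2 : (z - x / t) * t <= 1 * t) by (apply Rmult_le_compat_r; lra).
  apply Rabs_def1; nra.
Qed.

(* An open relation is a countable union of products of balls centred on a grid. *)
Lemma sigma_gen_open2 X Y S :
  measurable_wrt G X -> measurable_wrt G Y -> open2 S ->
  sigma_gen G (fun w => S (X w) (Y w)).
Proof.
  intros HX HY HS.
  set (t := fun k : nat => / (INR k + 1)).
  set (q := fun k i j : nat => (INR i - INR j) * t k).
  apply sg_ext with (fun w => exists k i1 j1 i2 j2 : nat,
    (forall x' y', Rabs (x' - q k i1 j1) < 2 * t k ->
                   Rabs (y' - q k i2 j2) < 2 * t k -> S x' y')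
    /\ Rabs (X w - q k i1 j1) < 2 * t k /\ Rabs (Y w - q k i2 j2) < 2 * t k).
  - do 5 (apply (sg_union G); intro).
    apply sigma_gen_and; [apply sigma_gen_const|].
    apply sigma_gen_and; [exact (HX _ (Borel_ball _ _)) | exact (HY _ (Borel_ball _ _))].
  - intros w; split.
    + intros [k [i1 [j1 [i2 [j2 [H1 [H2 H3]]]]]]]. auto.
    + intros Hw. destruct (HS _ _ Hw) as [r [Hr Hb]].
      destruct (exists_inv_INR_S_lt (r / 4)) as [k Hk]; [lra|].
      assert (Htk : 0 < t k) by apply inv_INR_S_pos.
      destruct (grid_approx (X w) (t k) Htk) as [i1 [j1 H1]].
      destruct (grid_approx (Y w) (t k) Htk) as [i2 [j2 H2]].
      exists k, i1, j1, i2, j2. fold (t k) in Hk. split; [|split; auto].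
      intros x' y' Hx Hy. apply Rabs_def2 in H1, H2, Hx, Hy.
      apply Hb; apply Rabs_def1; unfold q in *; lra.
Qed.

Lemma open2_plus_lt a : open2 (fun x y => x + y < a).
Proof.
  intros x y H. exists ((a - x - y) / 2). split; [lra|].
  intros x' y' Hx Hy. apply Rabs_def2 in Hx, Hy. lra.
Qed.

Lemma open2_mult_lt a : open2 (fun x y => x * y < a).
Proof.
  intros x y H. set (d := a - x * y). set (M := Rabs x + Rabs y + 1).
  assert (Hd : 0 < d) by (unfold d; lra).
  assert (HM : 0 < M) by (unfold M; pose proof (Rabs_pos x); pose proof (Rabs_pos y); lra).
  assert (HdM : 0 < d / (2 * M)) by (apply Rdiv_lt_0_compat; lra).
  exists (Rmin 1 (d / (2 * M))). split; [apply Rmin_glb_lt; lra|].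
  intros x' y' Hx Hy. set (r := Rmin 1 (d / (2 * M))) in *.
  assert (Hr1 : r <= 1) by apply Rmin_l.
  assert (Hr2 : r <= d / (2 * M)) by apply Rmin_r.
  set (dx := x' - x) in *. set (dy := y' - y) in *.
  assert (h1 : x * dy <= Rabs x * r).
  { eapply Rle_trans; [apply Rle_abs|]. rewrite Rabs_mult.
    apply Rmult_le_compat_l; [apply Rabs_pos | lra]. }
  assert (h2 : y * dx <= Rabs y * r).
  { eapply Rle_trans; [apply Rle_abs|]. rewrite Rabs_mult.
    apply Rmult_le_compat_l; [apply Rabs_pos | lra]. }
  assert (h3 : dx * dy <= 1 * r).
  { eapply Rle_trans; [apply Rle_abs|]. rewrite Rabs_mult.
    apply Rmult_le_compat; try apply Rabs_pos; lra. }
  assert (h4 : M * r <= d / 2).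
  { replace (d / 2) with (M * (d / (2 * M))) by (field; lra).
    apply Rmult_le_compat_l; lra. }
  replace (x' * y') with (x * y + x * dy + y * dx + dx * dy) by (unfold dx, dy; ring).
  unfold M, d in *. lra.
Qed.

Lemma measurable_wrt_plus X Y :
  measurable_wrt G X -> measurable_wrt G Y -> measurable_wrt G (fun w => X w + Y w).
Proof.
  intros HX HY. apply measurable_wrt_of_lt. intros a.
  apply (sigma_gen_open2 X Y (fun x y => x + y < a)); auto using open2_plus_lt.
Qed.

Lemma measurable_wrt_mult X Y :
  measurable_wrt G X -> measurable_wrt G Y -> measurable_wrt G (fun w => X w * Y w).
Proof.
  intros HX HY. apply measurable_wrt_of_lt. intros a.
  apply (sigma_gen_open2 X Y (fun x y => x * y < a)); auto using open2_mult_lt.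
Qed.

Lemma measurable_wrt_minus X Y :
  measurable_wrt G X -> measurable_wrt G Y -> measurable_wrt G (fun w => X w - Y w).
Proof.
  intros HX HY. apply measurable_wrt_ext with (fun w => X w + (-1) * Y w).
  - apply measurable_wrt_plus, measurable_wrt_mult; auto using measurable_wrt_const.
  - intros; ring.
Qed.

Lemma measurable_wrt_Rsum_list (l : list nat) (g : nat -> T -> R) :
  (forall a, In a l -> measurable_wrt G (g a)) ->
  measurable_wrt G (fun om => Rsum_list l (fun a => g a om)).
Proof.
  induction l as [|a l IH]; intros H; simpl.
  - apply measurable_wrt_const.
  - apply measurable_wrt_plus; [apply H; simpl; auto|].
    apply IH. intros; apply H; simpl; auto.
Qed.

Lemma Rmin_1_Rmax_0_le t a :
  Rmin 1 (Rmax t 0) <= a <-> 1 <= a \/ (0 <= a /\ t <= a).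
Proof. unfold Rmin, Rmax. repeat destruct Rle_dec; lra. Qed.

(* Clearing the denominators makes the sublevel sets polynomial in (D, X). *)
Lemma g_lam_div_le lam D X a : 0 < lam -> 0 < X ->
  (g_lam lam (D / X) <= a <-> 1 <= a \/ (0 <= a /\ 0 <= D + a * lam * X)).
Proof.
  intros Hl HX. unfold g_lam. rewrite Rmin_1_Rmax_0_le.
  assert (HXl : 0 < X * lam) by (apply Rmult_lt_0_compat; lra).
  assert (Ht : - (D / X) / lam * (X * lam) = - D) by (field; lra).
  assert (- (D / X) / lam <= a <-> 0 <= D + a * lam * X); [|tauto].
  split; intro H.
  - apply (Rmult_le_compat_r (X * lam)) in H; lra.
  - apply (Rmult_le_reg_r (X * lam)); lra.
Qed.

Lemma measurable_wrt_g_lam_div (Dl X : T -> R) lam :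
  0 < lam -> measurable_wrt G Dl -> measurable_wrt G X -> (forall w, 0 <= X w) ->
  measurable_wrt G (fun om => if Req_EM_T (X om) 0 then 0 else g_lam lam (Dl om / X om)).
Proof.
  intros Hl HD HX Hpos. apply measurable_wrt_of_le. intros a.
  apply sg_ext with (fun w => (X w = 0 /\ 0 <= a) \/
     (~ X w = 0 /\ (1 <= a \/ (0 <= a /\ 0 <= Dl w + (a * lam) * X w)))).
  - pose proof (HX _ (Borel_eq 0)) as HX0.
    apply sigma_gen_or; apply sigma_gen_and; auto using sg_compl, sigma_gen_const.
    apply sigma_gen_or, sigma_gen_and; try apply sigma_gen_const.
    apply (measurable_wrt_plus Dl (fun w => (a * lam) * X w)), Borel_ge; auto.
    apply measurable_wrt_mult; auto using measurable_wrt_const.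
  - intros w. destruct (Req_EM_T (X w) 0) as [h|h]; [tauto|].
    rewrite g_lam_div_le by (specialize (Hpos w); lra). tauto.
Qed.

End MeasurableFunctions.

Section Cascade.

Context {Omega : Type}.
Variables (N : nat) (E : nat -> nat -> bool) (D0 : nat -> Omega -> R)
  (Om : nat -> nat -> Omega -> R) (lam : R).
Hypothesis HOm : forall w v om, E w v = true -> 0 <= Om w v om.
Hypothesis Hlam : 0 < lam.

Lemma measurable_var (A : item -> Prop) i :
  A i -> measurable_wrt (sigmaA D0 Om A) (var D0 Om i).
Proof.
  intros Hi B HB. apply sg_base. exists i; split; auto. exists B; split; auto. tauto.
Qed.

Lemma measurable_sigmaA_mono (A A' : item -> Prop) Z :
  (forall i, A i -> A' i) ->
  measurable_wrt (sigmaA D0 Om A) Z -> measurable_wrt (sigmaA D0 Om A') Z.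
Proof.
  intros H. apply measurable_wrt_mono. intros S [i [Hi HB]]. exists i; auto.
Qed.

Lemma Xbar_nonneg z om : 0 <= Xbar N E Om z om.
Proof.
  unfold Xbar, Rsum_list. induction (seq 0 N) as [|u l IH]; simpl; [lra|].
  assert (0 <= Ind E z u * Om z u om); [|lra].
  unfold Ind. destruct (E z u) eqn:Hzu; [specialize (HOm z u om Hzu)|]; lra.
Qed.

Lemma measurable_Xbar A z :
  (forall u, E z u = true -> A (EdgeI z u)) ->
  measurable_wrt (sigmaA D0 Om A) (Xbar N E Om z).
Proof.
  intros H. apply measurable_wrt_Rsum_list. intros u _. unfold Ind.
  destruct (E z u) eqn:Hz.
  - apply measurable_wrt_mult; [apply measurable_wrt_const|].
    exact (measurable_var A (EdgeI z u) (H u Hz)).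
  - apply measurable_wrt_ext with (fun _ => 0); [apply measurable_wrt_const | intros; ring].
Qed.

Lemma measurable_Dfun A Delta z :
  (forall u, E z u = true -> A (EdgeI z u)) ->
  measurable_wrt (sigmaA D0 Om A) (Delta z) ->
  measurable_wrt (sigmaA D0 Om A) (Dfun N E Om lam Delta z).
Proof.
  intros H HD. apply measurable_wrt_g_lam_div; auto using measurable_Xbar, Xbar_nonneg.
Qed.

Lemma measurable_Sfun A Delta v :
  (forall w, E w v = true -> A (EdgeI w v) /\
     measurable_wrt (sigmaA D0 Om A) (Dfun N E Om lam Delta w)) ->
  measurable_wrt (sigmaA D0 Om A) (Sfun N E Om lam Delta v).
Proof.
  intros H. apply measurable_wrt_Rsum_list. intros w _. unfold Ind.
  destruct (E w v) eqn:Hw.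
  - destruct (H w Hw) as [H1 H2].
    apply measurable_wrt_mult; auto.
    apply measurable_wrt_mult; [apply measurable_wrt_const|].
    exact (measurable_var A (EdgeI w v) H1).
  - apply measurable_wrt_ext with (fun _ => 0); [apply measurable_wrt_const | intros; ring].
Qed.

Section PredecessorClosed.

Variables (A : item -> Prop) (K : nat -> Prop).
Hypothesis K_nodes : forall y, K y -> A (NodeI y).
Hypothesis K_out_edges : forall z u, K z -> E z u = true -> A (EdgeI z u).
Hypothesis K_pred_closed : forall y z, K y -> E z y = true -> K z.

Lemma measurable_cascade_closed n y :
  K y -> measurable_wrt (sigmaA D0 Om A) (cascade N E D0 Om lam n y).
Proof.
  revert y. induction n as [|n IH]; intros y Ky.
  - exact (measurable_var A (NodeI y) (K_nodes y Ky)).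
  - apply measurable_wrt_minus; [exact (measurable_var A (NodeI y) (K_nodes y Ky))|].
    apply measurable_Sfun. intros w Hw.
    split; [eauto|].
    apply measurable_Dfun; eauto.
Qed.

Lemma measurable_Dn_closed n y :
  K y -> measurable_wrt (sigmaA D0 Om A) (Dn N E D0 Om lam n y).
Proof. intros Ky. apply measurable_Dfun; eauto using measurable_cascade_closed. Qed.

End PredecessorClosed.

Lemma reach_snoc Rl x y z : reach Rl x y -> Rl y z -> reach Rl x z.
Proof.
  induction 1; intros Hr.
  - apply reach_step with z; [auto | apply reach_refl].
  - apply reach_step with y; auto.
Qed.

Hypothesis E_asym : forall u w, E u w = true -> E w u = false.

Lemma measurable_Dn_Cset v w n :
  E w v = true ->
  measurable_wrt (sigmaA D0 Om (Cset E v w (EdgeI w v))) (Dn N E D0 Om lam n w).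
Proof.
  intros Hwv. assert (Hvw : E v w = false) by auto.
  apply (measurable_Dn_closed _ (Defs.comp E v w)); unfold Defs.comp.
  - intros y Hy. right. exact Hy.
  - intros z u Hz Hzu.
    destruct (Nat.eq_dec z w) as [->|Hzw]; [destruct (Nat.eq_dec u v) as [->|Huv]|].
    + left; reflexivity.
    + right. repeat split; auto. apply reach_snoc with w; auto.
      split; [left; auto | intuition congruence].
    + right. repeat split; auto. apply reach_snoc with z; auto.
      split; [left; auto | intuition congruence].
  - intros y z Hy Hzy.
    destruct (Nat.eq_dec y w) as [->|Hyw]; [destruct (Nat.eq_dec z v) as [->|Hzv]|].
    + congruence.
    + apply reach_snoc with w; auto. split; [right; auto | intuition congruence].
    + destruct (Nat.eq_dec y v) as [->|Hyv]; [destruct (Nat.eq_dec z w) as [->|Hzw]|].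
      * apply reach_refl.
      * apply reach_snoc with v; auto. split; [right; auto | intuition congruence].
      * apply reach_snoc with y; auto. split; [right; auto | intuition congruence].
  - apply reach_refl.
Qed.

Lemma measurable_S_node n v :
  measurable_wrt (sigmaA D0 Om (Mminus E v)) (S_node N E D0 Om lam n v).
Proof.
  apply measurable_Sfun. intros w Hw. split.
  - exists w. split; auto. left; reflexivity.
  - apply measurable_sigmaA_mono with (Cset E v w (EdgeI w v)).
    + intros i Hi. exists w. auto.
    + apply measurable_Dn_Cset; auto.
Qed.

Lemma measurable_cascade_node n v :
  measurable_wrt (sigmaA D0 Om (fun i => Mminus E v i \/ i = NodeI v))
    (cascade N E D0 Om lam n v).
Proof.
  destruct n as [|n]; [exact (measurable_var _ (NodeI v) (or_intror eq_refl))|].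
  apply measurable_wrt_minus; [exact (measurable_var _ (NodeI v) (or_intror eq_refl))|].
  apply measurable_sigmaA_mono with (Mminus E v); [auto | apply measurable_S_node].
Qed.

Lemma measurable_S_edge n w v :
  E w v = true ->
  measurable_wrt (sigmaA D0 Om (fun i => Mminus E w i \/ Mplus_excl E w v i
                                         \/ i = NodeI w \/ i = EdgeI w v))
    (S_edge N E D0 Om lam n w v).
Proof.
  intros Hwv. unfold S_edge, Ind. rewrite Hwv.
  apply measurable_wrt_mult; [apply measurable_wrt_mult|].
  - apply measurable_wrt_const.
  - exact (measurable_var _ (EdgeI w v) (or_intror (or_intror (or_intror eq_refl)))).
  - apply measurable_Dfun.
    + intros u Hu. destruct (Nat.eq_dec u v) as [->|Huv]; [tauto|].
      right; left. exists u. repeat split; auto. left; reflexivity.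
    + apply measurable_sigmaA_mono with (fun i => Mminus E w i \/ i = NodeI w);
        [tauto | apply measurable_cascade_node].
Qed.

End Cascade.

Theorem proposition5 (N : nat) (E : nat -> nat -> bool) (HE : is_tree N E)
  (Omega : Type) (D0 : nat -> Omega -> R) (Om : nat -> nat -> Omega -> R)
  (HOm : forall w v om, E w v = true -> 0 <= Om w v om)
  (lam : R) (Hlam : 0 < lam <= 1) :
  forall (n v : nat), (v < N)%nat ->
    measurable_wrt
      (sigmaA D0 Om (fun i => Mminus E v i \/ i = NodeI v))
      (cascade N E D0 Om lam n v)
    /\ (forall w, E w v = true ->
          measurable_wrt
            (sigmaA D0 Om (fun i => Mminus E w i \/ Mplus_excl E w v i
                                    \/ i = NodeI w \/ i = EdgeI w v))
            (S_edge N E D0 Om lam n w v))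
    /\ measurable_wrt (sigmaA D0 Om (Mminus E v)) (S_node N E D0 Om lam n v).
Proof.
  destruct HE as [_ [_ [E_asym _]]].
  assert (Hlam0 : 0 < lam) by lra.
  intros n v _. split; [|split].
  - apply measurable_cascade_node; auto.
  - intros w Hwv. apply measurable_S_edge; auto.
  - apply measurable_S_node; auto.
Qed.
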